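(* Let $(A,+)$ be a finite abelian group with a fixed standard ppc-basis $e_1,\dots,e_r$, and let $\varepsilon_1,\varepsilon_2\in\mathrm{End}(A,+)$. Then $\varepsilon_1,\varepsilon_2$ are idempotent and commute with each other (under composition) if and only if there exist idempotent diagonal endomorphisms $\delta_1,\delta_2$ of $A$ and an automorphism $\alpha\in\mathrm{Aut}(A,+)$ with $\alpha^{-1}\varepsilon_1\alpha=\delta_1$ and $\alpha^{-1}\varepsilon_2\alpha=\delta_2$.
   Context: Every finite abelian group $A$ is a direct sum of cyclic groups of prime power order. A ppc-basis (prime power cyclic basis) of $A$ is a set $\{x_1,\dots,x_r\}$ of elements with $A=\langle x_1\rangle\oplus\cdots\oplus\langle x_r\rangle$ and each $\langle x_i\rangle$ cyclic of prime power order; the number $r$ (an isomorphism invariant) is the ppc-rank of $A$. Fix one such basis $e_1,\dots,e_r$, the standard ppc-basis. An endomorphism $\delta$ of $A$ is diagonal if for each $i$ there is $d_i\in\mathbb{Z}_{|e_i|}$ with $\delta(e_i)=d_ie_i$. An endomorphism $\varepsilon$ is idempotent if $\varepsilon\circ\varepsilon=\varepsilon$. Maps are composed as functions: $\alpha\beta=\alpha\circ\beta$. *)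

From HB Require Import structures.
From mathcomp Require Import all_boot all_order all_algebra all_fingroup.
Set Implicit Arguments. Unset Strict Implicit. Unset Printing Implicit Defensive.
Import GRing.Theory.
Local Open Scope ring_scope.

(* The finite abelian group (A,+) is the carrier of a finite Z-module V. *)

Definition zorder (V : finZmodType) (x : V) : nat := #[x]%g.

Definition is_endo (V : finZmodType) (f : V -> V) : Prop :=
  forall x y, f (x + y) = f x + f y.

Definition is_idempotent (V : finZmodType) (f : V -> V) : Prop :=
  forall x, f (f x) = f x.

Definition ppc_basis (V : finZmodType) (r : nat) (e : 'I_r -> V) : Prop :=
  (forall i, exists p k, prime p /\ (0 < k)%N /\ zorder (e i) = (p ^ k)%N) /\
  (forall x : V, exists c : 'I_r -> nat,
      (forall i, c i < zorder (e i))%N /\ x = \sum_(i < r) e i *+ c i) /\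
  (forall c c' : 'I_r -> nat,
      (forall i, c i < zorder (e i))%N -> (forall i, c' i < zorder (e i))%N ->
      \sum_(i < r) e i *+ c i = \sum_(i < r) e i *+ c' i -> forall i, c i = c' i).

(* f is diagonal w.r.t. e: f(e_i) = d_i e_i with d_i in Z_{|e_i|}
   (represented by a natural number d_i < |e_i|) *)
Definition is_diagonal (V : finZmodType) (r : nat) (e : 'I_r -> V) (f : V -> V) : Prop :=
  exists d : 'I_r -> nat, forall i, (d i < zorder (e i))%N /\ f (e i) = e i *+ d i.

(* The converse direction is immediate: conjugation by a bijection transports idempotency
   and commutation, and diagonal endomorphisms commute.  For the direct direction:
   1. An idempotent endomorphism f splits every f-stable subgroup G as Fix(f) \x Ker(f).
      Iterating over a commuting family of idempotents and refining each factor by a cyclic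
      decomposition yields a cyclic decomposition of G whose generators are common
      eigenvectors with eigenvalue 1 or 0 (common_eigen_decomposition).
   2. Applied to the p-part projections x |-> x_p this gives decompositions into cycles of
      prime-power order (primary_decomposition); applied to eps1, eps2 it gives such a
      decomposition b adapted to eps1 and eps2.
   3. The multiset of orders of a primary decomposition is an invariant, read off from the
      Omega-series of V, so b can be indexed as g_1, ..., g_r with #[g_i] = |e_i|.
   4. Then sum_i c_i e_i |-> sum_i c_i g_i is an automorphism alpha with alpha(e_i) = g_i,
      and alpha^-1 eps_j alpha maps each e_i to e_i or 0: it is diagonal and idempotent. *)

From HB Require Import structures.
From mathcomp Require Import all_boot all_order all_algebra all_fingroup all_solvable.
From mathcomp Require Import zify.
From Stdlib Require Import ClassicalEpsilon.
Set Implicit Arguments. Unset Strict Implicit. Unset Printing Implicit Defensive.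
Import GRing.Theory.
Local Open Scope ring_scope.

Section Endomorphisms.
Variables (V : finZmodType) (f : V -> V).
Hypothesis hf : is_endo f.

Lemma endo0 : f 0 = 0.
Proof. by apply: (addrI (f 0)); rewrite -hf !addr0. Qed.

Lemma endoB x y : f (x - y) = f x - f y.
Proof.
have fN z : f (- z) = - f z by apply: (addrI (f z)); rewrite -hf !subrr endo0.
by rewrite hf fN.
Qed.

Lemma endoMn x n : f (x *+ n) = f x *+ n.
Proof. by elim: n => [|n IH]; rewrite ?mulr0n ?endo0 // !mulrS hf IH. Qed.

Lemma endo_sum (I : Type) (s : seq I) (P : pred I) (F : I -> V) :
  f (\sum_(i <- s | P i) F i) = \sum_(i <- s | P i) f (F i).
Proof. by elim/big_rec2: _ => [|i y1 y2 _ <-]; [exact: endo0 | rewrite hf]. Qed.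

End Endomorphisms.

Lemma endo_id (V : finZmodType) : is_endo (@id V).
Proof. by []. Qed.

Lemma endo_zero (V : finZmodType) : is_endo (fun _ : V => 0).
Proof. by move=> x y; rewrite addr0. Qed.

Lemma sum_prodg (V : finZmodType) (I : Type) (s : seq I) (P : pred I) (F : I -> V) :
  \sum_(i <- s | P i) F i = (\prod_(i <- s | P i) F i)%g.
Proof. by elim: s => [|i s IH]; rewrite ?big_nil ?big_cons //; case: (P i); rewrite IH. Qed.

Lemma mulrn_modo (V : finZmodType) (y : V) n : y *+ (n %% #[y]%g) = y *+ n.
Proof. exact: expg_mod_order. Qed.

Lemma mem_bigdprod_cycle (V : finZmodType) (b : seq V) (G : {group V}) x :
  (\big[dprod/1]_(y <- b) <[y]>)%g = G -> x \in b -> x \in G.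
Proof.
move=> defG xb; rewrite -(bigdprodWY defG); case/splitPr: xb => bl br.
by rewrite mem_gen // big_cat big_cons !inE cycle_id orbT.
Qed.

Lemma equaliser_group_set (V : finZmodType) (f g : V -> V) (G : {group V}) :
  is_endo f -> is_endo g -> group_set [set x in G | f x == g x].
Proof.
move=> hf hg; apply/group_setP; split.
  by rewrite inE group1 -[1%g]/(0 : V) (endo0 hf) (endo0 hg) /=.
move=> x y; rewrite !inE => /andP[Gx /eqP fx] /andP[Gy /eqP fy].
by rewrite groupM //= -[(x * y)%g]/(x + y) hf hg fx fy.
Qed.

Section IdempotentSplitting.
Variables (V : finZmodType) (f : V -> V).
Hypotheses (hf : is_endo f) (fI : is_idempotent f).

Definition fixed_group (G : {group V}) := Group (equaliser_group_set G hf (@endo_id V)).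
Definition kernel_group (G : {group V}) := Group (equaliser_group_set G hf (@endo_zero V)).

(* An f-stable subgroup splits as Fix(f) \x Ker(f), through x = f x + (x - f x). *)
Lemma idempotent_dprod (G : {group V}) :
  (forall x, x \in G -> f x \in G) -> (fixed_group G \x kernel_group G)%g = G.
Proof.
move=> fG; rewrite dprodE; last first.
- apply/eqP; rewrite eqEsubset sub1G andbT; apply/subsetP => y.
  rewrite !inE => /andP[/andP[_ /eqP fy] /andP[_ /eqP]].
  by rewrite fy => ->.
- by apply/subsetP=> y _; apply/centP=> z _; exact: FinRing.zmod_mulgC.
apply/eqP; rewrite eqEsubset mul_subG /= ?setIdE ?subsetIl //.
apply/subsetP => x Gx; apply/mulsgP; exists (f x) (x - f x).
- by rewrite !inE fG //= fI.
- by rewrite !inE groupM ?groupV ?fG //= (endoB hf) fI subrr.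
- by rewrite -[(_ * _)%g]/(f x + (x - f x)) addrC subrK.
Qed.

End IdempotentSplitting.

Definition binary_eigen (V : finZmodType) (f : V -> V) (x : V) : Prop :=
  f x = x \/ f x = 0.

(* Induction on n, splitting G = Fix(F n) \x Ker(F n). *)
Lemma common_eigen_decomposition (V : finZmodType) (F : nat -> V -> V) (Q : V -> Prop) :
  (forall k, is_endo (F k)) -> (forall k, is_idempotent (F k)) ->
  (forall k l x, F k (F l x) = F l (F k x)) ->
  (forall H : {group V}, exists2 b : seq V,
     (\big[dprod/1]_(x <- b) <[x]>)%g = H & forall x, x \in b -> Q x) ->
  forall n (G : {group V}), (forall k x, (k < n)%N -> x \in G -> F k x \in G) ->
  exists2 b : seq V, (\big[dprod/1]_(x <- b) <[x]>)%g = G &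
    forall x, x \in b -> Q x /\ forall k, (k < n)%N -> binary_eigen (F k) x.
Proof.
move=> FE FI FC base; elim=> [|n IH] G stabG.
  by have [b defG bQ] := base G; exists b => // x /bQ.
have stab1 k x : (k < n)%N -> x \in fixed_group (FE n) G -> F k x \in fixed_group (FE n) G.
  move=> kn; rewrite !inE => /andP[Gx /eqP Fx].
  by rewrite stabG ?(ltn_trans kn) //= FC Fx.
have stab0 k x : (k < n)%N -> x \in kernel_group (FE n) G -> F k x \in kernel_group (FE n) G.
  move=> kn; rewrite !inE => /andP[Gx /eqP Fx].
  by rewrite stabG ?(ltn_trans kn) //= FC Fx (endo0 (FE k)).
have [b1 def1 b1P] := IH _ stab1.
have [b0 def0 b0P] := IH _ stab0.
exists (b1 ++ b0).
  by rewrite big_cat /= def1 def0 idempotent_dprod // => x; apply: stabG.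
move=> x; rewrite mem_cat => /orP[xb|xb].
- have [Qx eig] := b1P x xb; split=> // k; rewrite ltnS leq_eqVlt => /orP[/eqP->|/eig //].
  by left; have := mem_bigdprod_cycle def1 xb; rewrite !inE => /andP[_ /eqP].
- have [Qx eig] := b0P x xb; split=> // k; rewrite ltnS leq_eqVlt => /orP[/eqP->|/eig //].
  by right; have := mem_bigdprod_cycle def0 xb; rewrite !inE => /andP[_ /eqP].
Qed.

Definition prime_power_order (V : finGroupType) (x : V) : Prop :=
  exists p k, prime p /\ #[x]%g = (p ^ k.+1)%N.

Section PrimaryParts.
Variable V : finZmodType.

Lemma constt_endo (p : nat) : is_endo (fun x : V => (x.`_p)%g).
Proof. by move=> x y; rewrite -[x + y]/(x * y)%g consttM //; apply: FinRing.zmod_mulgC. Qed.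

Lemma constt_idempotent (p : nat) : is_idempotent (fun x : V => (x.`_p)%g).
Proof. by move=> x; rewrite constt_p_elt // p_elt_constt. Qed.

Lemma constt_commute (p q : nat) (x : V) : ((x.`_q).`_p)%g = ((x.`_p).`_q)%g.
Proof.
have [->//|npq] := eqVneq p q.
have other (a b : nat) (y : V) : a != b -> ((y.`_a).`_b)%g = 1%g.
  move=> nab; apply/constt1P; apply: sub_p_elt (p_elt_constt a y) => z /eqnP->.
  by rewrite !inE.
by rewrite !other // eq_sym.
Qed.

(* Every subgroup of V is a direct product of cycles of prime-power order: refine a cyclic
   decomposition along the p-part projections, p <= |V|; a generator x fixed by its
   smallest prime divisor p is a p-element, and it cannot be killed by x |-> x_p. *)
Lemma primary_decomposition (H : {group V}) :
  exists2 b : seq V, (\big[dprod/1]_(x <- b) <[x]>)%g = H &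
    forall x, x \in b -> prime_power_order x.
Proof.
have base (K : {group V}) : exists2 b : seq V,
    (\big[dprod/1]_(x <- b) <[x]>)%g = K & forall x, x \in b -> (1 < #[x]%g)%N.
  have [b defK ordb] := abelian_structure (FinRing.zmod_abelian K).
  exists b => // x xb; have := abelian_type_gt1 K; rewrite -ordb => /allP; apply.
  exact: map_f.
have stabH k x : (k < #|V|.+1)%N -> x \in H -> (x.`_k)%g \in H.
  by move=> _ Hx; apply: subsetP (cycle_constt k x); rewrite cycle_subG.
have [b defH bP] := common_eigen_decomposition (@constt_endo) (@constt_idempotent)
  (@constt_commute) base stabH.
exists b => // x /bP[o1 eig]; set p := pdiv #[x]%g.
have p_pr : prime p by rewrite pdiv_prime.
have p_small : (p < #|V|.+1)%N.
  rewrite ltnS (leq_trans (pdiv_leq (ltnW o1))) //.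
  by rewrite -cardsT dvdn_leq ?cardG_gt0 // order_dvdG ?in_setT.
case: (eig p p_small) => [fix_x | kill_x].
  have /p_natP[k xk] : (p.-elt x)%g by rewrite -fix_x p_elt_constt.
  exists p, k.-1; rewrite prednK // lt0n; apply: contraTneq o1 => k0.
  by rewrite xk k0.
have /constt1P p'x : (x.`_p = 1)%g by [].
have p_div : p \in \pi(#[x]%g) by rewrite pi_pdiv.
by have := pnatPpi p'x p_div; rewrite !inE eqxx.
Qed.

End PrimaryParts.

Lemma count_predD (T : Type) (a b : pred T) (s : seq T) : subpred b a ->
  count (fun y => a y && ~~ b y) s = (count a s - count b s)%N.
Proof.
move=> ba; elim: s => //= y s IH; rewrite IH.
have : (count b s <= count a s)%N by apply: sub_count.
case By: (b y); last by case: (a y) => /=; lia.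
by rewrite ba //=; lia.
Qed.

Lemma prime_power_eq p k q j : prime p -> prime q ->
  ((q ^ j.+1)%N == (p ^ k.+1)%N) =
    (k < logn p (q ^ j.+1))%N && ~~ (k.+1 < logn p (q ^ j.+1))%N.
Proof.
move=> p_pr q_pr; have [<-|nqp] := eqVneq q p.
  by rewrite eqn_exp2l ?prime_gt1 // pfactorK //; lia.
rewrite lognX logn_prime // [p == q]eq_sym (negbTE nqp) muln0 /=.
apply/negbTE; apply: contra_neq nqp => eq_pw.
have := pfactorK k.+1 p_pr; rewrite -eq_pw lognX logn_prime //.
by case: eqP => [->|_]; rewrite ?muln0.
Qed.

Lemma count_primary_orders (V : finZmodType) (b : seq V) p k :
  (\big[dprod/1]_(x <- b) <[x]>)%g = [set: V] -> (forall x, x \in b -> prime_power_order x) ->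
  prime p ->
  count (pred1 (p ^ k.+1)%N) (map order b) =
    (logn p #|'Ohm_k.+1([set: V]) : 'Ohm_k([set: V])|%g -
     logn p #|'Ohm_k.+2([set: V]) : 'Ohm_k.+1([set: V])|%g)%N.
Proof.
move=> defV bP p_pr; rewrite -!(count_logn_dprod_cycle _ _ defV) count_map.
rewrite -count_predD; last by move=> y /= lt_y; apply: ltn_trans lt_y.
apply: eq_in_count => y /bP[q [j [q_pr oy]]] /=; rewrite oy; exact: prime_power_eq.
Qed.

Lemma primary_orders_perm_eq (V : finZmodType) (b1 b2 : seq V) :
  (\big[dprod/1]_(x <- b1) <[x]>)%g = [set: V] -> (forall x, x \in b1 -> prime_power_order x) ->
  (\big[dprod/1]_(x <- b2) <[x]>)%g = [set: V] -> (forall x, x \in b2 -> prime_power_order x) ->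
  perm_eq (map order b1) (map order b2).
Proof.
move=> def1 b1P def2 b2P; apply/allP => m; rewrite -map_cat => /mapP[x].
rewrite mem_cat => xb ->; have [p [k [p_pr ->]]] : prime_power_order x.
  by case/orP: xb => [/b1P|/b2P].
by rewrite /= !count_primary_orders.
Qed.

Lemma match_primary_decompositions (V : finZmodType) (r : nat) (e : 'I_r -> V) (b : seq V) :
  (\big[dprod/1]_(i < r) <[e i]>)%g = [set: V] -> (forall i, prime_power_order (e i)) ->
  (\big[dprod/1]_(x <- b) <[x]>)%g = [set: V] -> (forall x, x \in b -> prime_power_order x) ->
  exists g : 'I_r -> V, [/\ forall i, g i \in b, forall i, #[g i]%g = #[e i]%g &
    (\big[dprod/1]_(i < r) <[g i]>)%g = [set: V]].
Proof.
move=> defe eP defb bP; set eb := map e (enum 'I_r).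
have defeb : (\big[dprod/1]_(x <- eb) <[x]>)%g = [set: V].
  by rewrite big_map big_enum.
have /(perm_iotaP 0%N)[Is perm_Is ordIs] : perm_eq (map order eb) (map order b).
  by apply: primary_orders_perm_eq defeb _ defb bP => _ /mapP[i _ ->].
rewrite size_map in perm_Is.
have size_Is : size Is = r.
  by rewrite -(size_map (nth 0%N (map order b))) -ordIs !size_map -enumT size_enum_ord.
have Is_b (i : 'I_r) : (nth 0%N Is i < size b)%N.
  have : nth 0%N Is i \in iota 0 (size b) by rewrite -(perm_mem perm_Is) mem_nth ?size_Is.
  by rewrite mem_iota.
exists (fun i => nth 0 b (nth 0%N Is i)); split=> [i | i |]; first exact: mem_nth.
  have := congr1 (fun s => nth 0%N s i) ordIs.
  rewrite /= (nth_map 0) ?size_map /eb -?enumT ?size_enum_ord // (nth_map i) ?size_enum_ord //.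
  by rewrite nth_ord_enum (nth_map 0%N) ?size_Is // (nth_map 0) // => ->.
apply: etrans defb; rewrite (big_nth 0) /index_iota subn0 -(perm_big _ perm_Is).
by rewrite (big_nth 0%N) size_Is big_mkord.
Qed.

Lemma dprod_relation (V : finZmodType) (r : nat) (g : 'I_r -> V) (m : 'I_r -> nat) :
  (\big[dprod/1]_(i < r) <[g i]>)%g = [set: V] ->
  \sum_i g i *+ m i = 0 -> forall i, (#[g i]%g %| m i)%N.
Proof.
move=> defV rel i.
have : (\big[dprod/1]_(i < r) <[g i]>%G)%g == (\prod_(i < r) <[g i]>%G)%G.
  by rewrite bigprodGE (bigdprodWY defV) defV.
move/bigdprodYP/(_ i isT); rewrite bigprodGE subsetD => /andP[_ tiV].
rewrite order_dvdn; apply: contraTT tiV => nz_gm; apply/pred0Pn.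
exists (g i ^+ m i)%g; rewrite /= !inE nz_gm mem_cycle andbT.
have -> : (g i ^+ m i)%g = - \sum_(j | j != i) g j *+ m j.
  by apply/eqP; rewrite -addr_eq0 -[(g i ^+ m i)%g]/(g i *+ m i) -(bigD1 i (P:=predT)) //= rel.
rewrite -[- _]/((_)^-1)%g groupV sum_prodg andbT; apply: group_prod => j nji.
by apply: mem_gen; apply/bigcupP; exists j => //; apply: mem_cycle.
Qed.

Section PpcCoordinates.
Variables (V : finZmodType) (r : nat) (e : 'I_r -> V).
Hypothesis he : ppc_basis e.

(* The coordinates of x in the ppc-basis e, the i-th one chosen in [0, |e_i|). *)
Definition ppc_coord (x : V) : 'I_r -> nat :=
  proj1_sig (constructive_indefinite_description _ (he.2.1 x)).

Lemma ppc_coordP x :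
  (forall i, ppc_coord x i < zorder (e i))%N /\ x = \sum_i e i *+ ppc_coord x i.
Proof. exact: proj2_sig (constructive_indefinite_description _ (he.2.1 x)). Qed.

Lemma ppc_prime_power i : prime_power_order (e i).
Proof. by have [p [k [p_pr [k_gt0 ek]]]] := he.1 i; exists p, k.-1; rewrite prednK. Qed.

Lemma ppc_order_gt1 i : (1 < zorder (e i))%N.
Proof.
have [p [k [p_pr ek]]] := ppc_prime_power i.
by rewrite /zorder ek -[1%N](expn0 p) ltn_exp2l ?prime_gt1.
Qed.

(* By uniqueness of representations, any representation of x yields its coordinates
   modulo the orders of the basis elements. *)
Lemma ppc_coord_sum (m : 'I_r -> nat) i :
  ppc_coord (\sum_j e j *+ m j) i = (m i %% zorder (e i))%N.
Proof.
have [_ [_ uniq_rep]] := he; set x := \sum_j e j *+ m j.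
apply: (uniq_rep (ppc_coord x) (fun i => m i %% zorder (e i))%N) => [j | j |].
- exact: (ppc_coordP x).1.
- by rewrite ltn_pmod // /zorder order_gt0.
by rewrite -(ppc_coordP x).2; apply: eq_bigr => j _; rewrite mulrn_modo.
Qed.

Lemma ppc_coordD x y i :
  ppc_coord (x + y) i = ((ppc_coord x i + ppc_coord y i) %% zorder (e i))%N.
Proof.
have -> : x + y = \sum_j e j *+ (ppc_coord x j + ppc_coord y j).
  by under eq_bigr do rewrite mulrnDr; rewrite big_split /= -!(ppc_coordP _).2.
exact: ppc_coord_sum.
Qed.

Lemma ppc_coord_single j m i :
  ppc_coord (e j *+ m) i = if i == j then (m %% zorder (e i))%N else 0%N.
Proof.
have -> : e j *+ m = \sum_k e k *+ (if k == j then m else 0%N).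
  by rewrite (bigD1 j) //= eqxx big1 ?addr0 // => k /negbTE->.
by rewrite ppc_coord_sum; case: (i == j); rewrite ?mod0n.
Qed.

Lemma ppc_coord_kernel i : group_set [set y : V | ppc_coord y i == 0%N].
Proof.
apply/group_setP; split.
  by rewrite inE -[1%g]/(e i *+ 0) ppc_coord_single eqxx mod0n.
by move=> x y; rewrite !inE -[(x * y)%g]/(x + y) ppc_coordD => /eqP-> /eqP->; rewrite mod0n.
Qed.

Lemma ppc_dprod : (\big[dprod/1]_(i < r) <[e i]>)%g = [set: V].
Proof.
have genV : (\prod_(i < r) <[e i]>%G)%G = [set: V] :> {set V}.
  rewrite bigprodGE; apply/eqP; rewrite eqEsubset subsetT /=.
  apply/subsetP => x _; rewrite (ppc_coordP x).2 sum_prodg; apply: group_prod => i _.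
  by apply: mem_gen; apply/bigcupP; exists i => //; apply: mem_cycle.
rewrite -genV; apply/eqP/bigdprodYP => i _; rewrite bigprodGE subsetD.
apply/andP; split.
  by apply/subsetP=> y _; apply/centP=> z _; apply: FinRing.zmod_mulgC.
have others : << \bigcup_(j | true && (j != i)) <[e j]>%G >>%g
    \subset Group (ppc_coord_kernel i).
  rewrite gen_subG; apply/bigcupsP => j /= nji; apply/subsetP => y /cycleP[m ->].
  by rewrite inE -[(e j ^+ m)%g]/(e j *+ m) ppc_coord_single [i == j]eq_sym (negbTE nji).
apply/pred0P => y /=; apply/negbTE/andP => -[/(subsetP others)].
rewrite !inE => coord_y /andP[nty /cycleP[m ym]]; move: coord_y nty.
rewrite ym -[(e i ^+ m)%g]/(e i *+ m) ppc_coord_single eqxx /zorder -mulrn_modo.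
by move=> /eqP->; rewrite mulr0n eqxx.
Qed.

(* Transport of the basis: if g_i generate a direct decomposition of V with #[g_i] = |e_i|,
   then sum_i c_i e_i |-> sum_i c_i g_i is an injective endomorphism sending e_i to g_i. *)
Lemma ppc_transfer (g : 'I_r -> V) :
  (\big[dprod/1]_(i < r) <[g i]>)%g = [set: V] -> (forall i, #[g i]%g = #[e i]%g) ->
  exists alpha : V -> V, [/\ is_endo alpha, injective alpha & forall i, alpha (e i) = g i].
Proof.
move=> defV og; pose alpha x := \sum_i g i *+ ppc_coord x i.
have alpha_endo : is_endo alpha.
  move=> x y; rewrite /alpha -big_split; apply: eq_bigr => i _ /=.
  by rewrite ppc_coordD /zorder -og mulrn_modo mulrnDr.
have alpha_ker x : alpha x = 0 -> x = 0.
  move=> ax0; rewrite (ppc_coordP x).2 big1 // => i _.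
  have := dprod_relation defV ax0 i; rewrite og.
  have := (ppc_coordP x).1 i; rewrite /zorder; case: (ppc_coord x i) => // n lt_n.
  by move=> /(dvdn_leq (ltn0Sn n)); rewrite leqNgt lt_n.
exists alpha; split=> // [x y axy | i].
  by apply/eqP; rewrite -subr_eq0; apply/eqP/alpha_ker; rewrite (endoB alpha_endo) axy subrr.
rewrite /alpha (bigD1 i) //= big1 ?addr0 => [|j nji].
  by rewrite -[e i]mulr1n ppc_coord_single eqxx modn_small ?ppc_order_gt1.
by rewrite -[e i]mulr1n ppc_coord_single (negbTE nji).
Qed.

End PpcCoordinates.

Lemma adapted_primary_decomposition (V : finZmodType) (eps1 eps2 : V -> V) :
  is_endo eps1 -> is_endo eps2 -> is_idempotent eps1 -> is_idempotent eps2 ->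
  (forall x, eps1 (eps2 x) = eps2 (eps1 x)) ->
  exists b : seq V, [/\ (\big[dprod/1]_(x <- b) <[x]>)%g = [set: V],
    forall x, x \in b -> prime_power_order x &
    forall x, x \in b -> binary_eigen eps1 x /\ binary_eigen eps2 x].
Proof.
move=> h1 h2 i1 i2 c12.
pose F k : V -> V := match k with 0 => eps1 | 1 => eps2 | _ => id end.
have FE k : is_endo (F k) by case: k => [|[|k]].
have FI k : is_idempotent (F k) by case: k => [|[|k]].
have FC k l x : F k (F l x) = F l (F k x).
  by case: k => [|[|k]]; case: l => [|[|l]] //=; rewrite c12.
have [b defV bP] := common_eigen_decomposition FE FI FC (@primary_decomposition V)
  (n := 2) (G := [set: V]%G) (fun _ _ _ _ => in_setT _).
exists b; split=> [|x /bP[] //|x /bP[_ eig]] //.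
by split; [apply: (eig 0%N) | apply: (eig 1%N)].
Qed.

Section Conjugation.
Variables (V : finZmodType) (alpha alpha_inv : V -> V).
Hypotheses (alpha_endo : is_endo alpha) (alphaK : cancel alpha alpha_inv)
  (alpha_invK : cancel alpha_inv alpha).

Definition conjugate (eps : V -> V) : V -> V := fun x => alpha_inv (eps (alpha x)).

Lemma conjugate_endo eps : is_endo eps -> is_endo (conjugate eps).
Proof.
move=> heps x y; apply: (can_inj alphaK).
by rewrite /conjugate [RHS]alpha_endo !alpha_invK -heps -alpha_endo.
Qed.

Lemma conjugate_idempotent eps : is_idempotent eps -> is_idempotent (conjugate eps).
Proof. by move=> ieps x; rewrite /conjugate alpha_invK ieps. Qed.

Lemma conjugate_diagonal (r : nat) (e : 'I_r -> V) eps :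
  ppc_basis e -> is_endo eps -> (forall i, binary_eigen eps (alpha (e i))) ->
  is_diagonal e (conjugate eps).
Proof.
move=> he heps eig; exists (fun i => if eps (alpha (e i)) == alpha (e i) then 1%N else 0%N).
have o1 := ppc_order_gt1 he; move=> i; split.
  by case: ifP => _; [apply: o1 | apply: ltn_trans (o1 i)].
rewrite /conjugate; case: eqP => [-> | not_fixed]; first by rewrite alphaK mulr1n.
by have [//|->] := eig i; rewrite mulr0n -{1}(endo0 alpha_endo) alphaK.
Qed.

(* Conversely, eps is recovered from its conjugate delta as alpha delta alpha^-1, so that
   idempotency and commutation are transported back. *)
Lemma conjugate_reflect eps delta :
  (forall x, conjugate eps x = delta x) -> forall x, eps x = alpha (delta (alpha_inv x)).
Proof. by move=> def x; rewrite -def /conjugate !alpha_invK. Qed.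

End Conjugation.

(* Diagonal endomorphisms commute: on each e_i both act by scalars. *)
Lemma diagonal_commute (V : finZmodType) (r : nat) (e : 'I_r -> V) (d1 d2 : V -> V) :
  ppc_basis e -> is_endo d1 -> is_endo d2 -> is_diagonal e d1 -> is_diagonal e d2 ->
  forall x, d1 (d2 x) = d2 (d1 x).
Proof.
move=> he hd1 hd2 [s1 diag1] [s2 diag2] x; have [c [_ ->]] := he.2.1 x.
rewrite !endo_sum //; apply: eq_bigr => i _.
rewrite !endoMn // (diag2 i).2 (diag1 i).2 !endoMn // (diag2 i).2 (diag1 i).2.
by rewrite -!mulrnA mulnCA.
Qed.

Local Close Scope ring_scope.

Theorem theorem5p9 (V : finZmodType) (r : nat) (e : 'I_r -> V)
  (he : ppc_basis e) (eps1 eps2 : V -> V)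
  (h1 : is_endo eps1) (h2 : is_endo eps2) :
  (is_idempotent eps1 /\ is_idempotent eps2 /\
   (forall x, eps1 (eps2 x) = eps2 (eps1 x)))
  <->
  (exists (delta1 delta2 : V -> V) (alpha alpha_inv : V -> V),
      is_endo delta1 /\ is_endo delta2 /\
      is_idempotent delta1 /\ is_idempotent delta2 /\
      is_diagonal e delta1 /\ is_diagonal e delta2 /\
      is_endo alpha /\ cancel alpha alpha_inv /\ cancel alpha_inv alpha /\
      (forall x, alpha_inv (eps1 (alpha x)) = delta1 x) /\
      (forall x, alpha_inv (eps2 (alpha x)) = delta2 x)).
Proof.
split=> [[i1 [i2 c12]] |].
- have [b [defV bP bE]] := adapted_primary_decomposition h1 h2 i1 i2 c12.
  have [g [gb og defg]] :=
    match_primary_decompositions (ppc_dprod he) (ppc_prime_power he) defV bP.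
  have [alpha [aE ainj ae]] := ppc_transfer he defg og.
  have [ai aK Ka] := injF_bij ainj.
  have eig1 i : binary_eigen eps1 (alpha (e i)) by rewrite ae; have [] := bE _ (gb i).
  have eig2 i : binary_eigen eps2 (alpha (e i)) by rewrite ae; have [] := bE _ (gb i).
  have endo1 := conjugate_endo aE aK Ka h1; have endo2 := conjugate_endo aE aK Ka h2.
  have idem1 := conjugate_idempotent Ka i1; have idem2 := conjugate_idempotent Ka i2.
  have diag1 := conjugate_diagonal aE aK he h1 eig1.
  have diag2 := conjugate_diagonal aE aK he h2 eig2.
  exists (conjugate alpha ai eps1), (conjugate alpha ai eps2), alpha, ai.
  by do ![assumption | split].
- case=> [d1 [d2 [alpha [ai [hd1 [hd2 [di1 [di2 [diag1 [diag2 [_ [aK [Ka [c1 c2]]]]]]]]]]]]]].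
  have e1 := conjugate_reflect Ka c1; have e2 := conjugate_reflect Ka c2.
  have dC := diagonal_commute he hd1 hd2 diag1 diag2.
  by split; [|split] => [x|x|x]; rewrite ?e1 ?e2 ?aK ?di1 ?di2 ?dC.
Qed.
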